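(* Let $q\in L_2(0,\pi)$ be real valued, $h,H\in\mathbb R$, $\omega=\frac12\int_0^\pi q(t)\,dt$, and suppose $0$ is an eigenvalue of the problem $-y''+q(x)y=\rho^2y$ on $(0,\pi)$, $y'(0)-hy(0)=0$, $y'(\pi)+Hy(\pi)=0$. Let $\varphi(\rho,x)$ be the solution with $\varphi(\rho,0)=1$, $\varphi'(\rho,0)=h$, with NSBF coefficients $g_n(x)$, $\gamma_n(x)$ (see context), and put $h_n:=\gamma_n(\pi)+Hg_n(\pi)$, $n\ge0$. Then $$h+H+\omega=-h_0,$$ and the characteristic function $\Phi(\rho):=\varphi'(\rho,\pi)+H\varphi(\rho,\pi)$ satisfies, for all $\rho\in\mathbb C$, $$\Phi(\rho)=-\rho\sin(\rho\pi)+h_0\left(\mathbf j_0(\rho\pi)-\cos(\rho\pi)\right)+\sum_{n=1}^\infty(-1)^nh_n\mathbf j_{2n}(\rho\pi).$$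
   Context: $\mathbf j_k$ denotes the spherical Bessel function of the first kind of order $k$; $\mathbf j_0(z)=\sin z/z$. It is known (Kravchenko–Navarro–Torba) that $\varphi(\rho,x)=\cos(\rho x)+\sum_{n=0}^\infty(-1)^ng_n(x)\mathbf j_{2n}(\rho x)$ and $\varphi'(\rho,x)=-\rho\sin(\rho x)+\left(h+\frac12\int_0^xq(t)dt\right)\cos(\rho x)+\sum_{n=0}^\infty(-1)^n\gamma_n(x)\mathbf j_{2n}(\rho x)$, with $\rho$-independent coefficients, both series converging for every $\rho\in\mathbb C$, where $g_0(x)=\varphi(0,x)-1$ and $\gamma_0(x)=g_0'(x)-h-\frac12\int_0^xq(t)dt$. *)

From HB Require Import structures.
From mathcomp Require Import all_boot all_order all_algebra.
From mathcomp Require Import all_classical all_reals all_analysis.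
From mathcomp Require Import complex.
Set Implicit Arguments. Unset Strict Implicit. Unset Printing Implicit Defensive.
Import Order.TTheory GRing.Theory Num.Theory.
Import numFieldNormedType.Exports.
Local Open Scope classical_set_scope.
Local Open Scope ring_scope.
Local Open Scope complex_scope.

Section Defs.
Variable R : realType.
Local Notation C := R[i].
Local Notation mu := (@lebesgue_measure R).

Definition coshR (b : R) : R := (expR b + expR (- b)) / 2.
Definition sinhR (b : R) : R := (expR b - expR (- b)) / 2.

Definition ccos (z : C) : C :=
  (cos (complex.Re z) * coshR (complex.Im z)) +i* (- (sin (complex.Re z) * sinhR (complex.Im z))).
Definition csin (z : C) : C :=
  (sin (complex.Re z) * coshR (complex.Im z)) +i* (cos (complex.Re z) * sinhR (complex.Im z)).

(* spherical Bessel functions of the first kind, via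
   j_0 z = sin z / z, j_1 z = sin z / z^2 - cos z / z,
   j_(k+2) z = (2k+3)/z j_(k+1) z - j_k z   (z <> 0),
   extended by continuity at z = 0: j_0 0 = 1, j_k 0 = 0 for k >= 1. *)
Definition sph_j0 (z : C) : C := if z == 0 then 1 else csin z / z.
Definition sph_j1 (z : C) : C :=
  if z == 0 then 0 else csin z / z ^+ 2 - ccos z / z.
Fixpoint sph_pair (k : nat) (z : C) : C * C :=
  match k with
  | 0%N => (sph_j0 z, sph_j1 z)
  | k'.+1 => let: (a, b) := sph_pair k' z in
      (b, if z == 0 then 0 else (2 * k'%:R + 3) / z * b - a)
  end.
Definition sph_j (k : nat) (z : C) : C := (sph_pair k z).1.

Definition ccvg (s : nat -> C) (l : C) : Prop :=
  (fun n => complex.Re (s n)) @ \oo --> complex.Re l /\ (fun n => complex.Im (s n)) @ \oo --> complex.Im l.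
Definition cseries (a : nat -> C) (l : C) : Prop :=
  ccvg (fun N => \sum_(0 <= n < N) a n) l.

Definition cintegrable (a b : R) (f : R -> C) : Prop :=
  mu.-integrable `[a, b] (fun t => (complex.Re (f t))%:E) /\
  mu.-integrable `[a, b] (fun t => (complex.Im (f t))%:E).
Definition cint (a b : R) (f : R -> C) : C :=
  (Rintegral mu `[a, b] (fun t => complex.Re (f t))) +i*
  (Rintegral mu `[a, b] (fun t => complex.Im (f t))).

Definition L2_0pi (q : R -> R) : Prop :=
  measurable_fun `[0, pi] q /\
  (\int[mu]_(x in `[0%R, pi]) ((q x) ^+ 2)%:E < +oo)%E.

(* phi (rho, .), with derivative dphi (rho, .), is the (Caratheodory) solution of
   -y'' + q y = rho^2 y on [0, pi], y(0) = 1, y'(0) = h: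
   phi and dphi are absolutely continuous, phi' = dphi, dphi' = (q - rho^2) phi a.e. *)
Definition is_phi (q : R -> R) (h : R) (phi dphi : C -> R -> C) : Prop :=
  forall (rho : C) (x : R), 0 <= x <= pi ->
    cintegrable 0 x (fun t => ((q t)%:C - rho ^+ 2) * phi rho t) /\
    dphi rho x = h%:C + cint 0 x (fun t => ((q t)%:C - rho ^+ 2) * phi rho t) /\
    cintegrable 0 x (dphi rho) /\
    phi rho x = 1 + cint 0 x (dphi rho).

(* 0 is an eigenvalue of -y'' + q y = rho^2 y, y'(0) - h y(0) = 0,
   y'(pi) + H y(pi) = 0 : there is a nontrivial (Caratheodory) solution y,
   with derivative dy, of -y'' + q y = 0 satisfying both boundary conditions. *)
Definition zero_is_eigenvalue (q : R -> R) (h H : R) : Prop :=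
  exists y dy : R -> R,
    (forall x, 0 <= x <= pi ->
       mu.-integrable `[0, x] (fun t => (q t * y t)%:E) /\
       dy x = dy 0 + Rintegral mu `[0, x] (fun t => q t * y t) /\
       mu.-integrable `[0, x] (fun t => (dy t)%:E) /\
       y x = y 0 + Rintegral mu `[0, x] dy) /\
    (exists x, 0 <= x <= pi /\ y x != 0) /\
    dy 0 - h * y 0 = 0 /\
    dy pi + H * y pi = 0.

(* NSBF representations of phi and phi' (the "known" facts of the context),
   with coefficients g n, gam n : R -> R *)
Definition NSBF_coeffs (q : R -> R) (h : R) (phi dphi : C -> R -> C)
    (g gam : nat -> R -> R) : Prop :=
  (forall (rho : C) (x : R), 0 <= x <= pi ->
     cseries (fun n => ((-1) ^+ n * g n x)%:C * sph_j (2 * n) (rho * x%:C))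
             (phi rho x - ccos (rho * x%:C))) /\
  (forall (rho : C) (x : R), 0 <= x <= pi ->
     cseries (fun n => ((-1) ^+ n * gam n x)%:C * sph_j (2 * n) (rho * x%:C))
             (dphi rho x + rho * csin (rho * x%:C)
              - (h + Rintegral mu `[0, x] q / 2)%:C * ccos (rho * x%:C))) /\
  (forall x, 0 <= x <= pi -> (g 0%N x)%:C = phi 0 x - 1) /\
  (forall x, 0 < x < pi ->
     gam 0%N x = derive1 (g 0%N) x - h - Rintegral mu `[0, x] q / 2).

End Defs.

From mathcomp Require Import all_boot all_order all_algebra.
From mathcomp Require Import all_classical all_reals all_analysis.
From mathcomp Require Import complex.
From mathcomp Require Import measurable_realfun ring lra.
Import Order.TTheory GRing.Theory Num.Theory.
Import numFieldNormedType.Exports.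

(* The real part u of phi(0, .) solves y'' = q y, y(0) = 1, y'(0) = h, in integrated form.
   This Volterra problem has unique solutions: for zero data, splitting
   |q| <= k q^2 / 2 + 1 / (2 k) shows that once the solution vanishes on [0, a], the sup of
   |y| + |y'| on [a, a + d] is at most half of itself, for a step d depending only on the
   L^2 norm of q.  Hence the eigenfunction is y(0) u with y(0) <> 0, and the boundary
   condition at pi gives Phi(0) = 0.  At rho = 0 only the term j_0(0) = 1 survives in the
   NSBF series of phi', which turns Phi(0) = 0 into h + H + omega = - h_0; adding H times
   the series of phi to that of phi' and splitting off the n = 0 term gives the series of
   Phi. *)

Local Open Scope classical_set_scope.
Local Open Scope ring_scope.

Section Volterra.
Context {R : realType}.
Local Notation mu := (@lebesgue_measure R).

Lemma normr_le_scaled_sqr (k x : R) : 0 < k -> `|x| <= k / 2 * x ^+ 2 + 1 / (2 * k).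
Proof.
move=> k0; rewrite -subr_ge0 -[x ^+ 2]real_normK ?num_real //.
have -> : k / 2 * `|x| ^+ 2 + 1 / (2 * k) - `|x| = (k * `|x| - 1) ^+ 2 / (2 * k).
  by field; rewrite gt_eqF.
by rewrite divr_ge0 ?sqr_ge0 // mulr_ge0 // ltW.
Qed.

Lemma lebesgue_measure_itvoc (a t : R) : a <= t -> mu `]a, t] = (t - a)%:E.
Proof.
move=> at_; rewrite lebesgue_measure_itv /=.
case: ltP => //=.
rewrite lee_fin => ta; have -> : t = a by apply/le_anti; rewrite at_ ta.
by rewrite subrr.
Qed.

Lemma Rintegral_norm_le_subset (f : R -> R) (t b : R) : 0 <= t -> t <= b ->
  mu.-integrable `[0, b] (EFin \o f) ->
  Rintegral mu `[0, t] (fun x => `|f x|) <= Rintegral mu `[0, b] (fun x => `|f x|).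
Proof.
move=> t0 tb itf; have itn := integrable_norm itf.
have sub : `[0, t] `<=` `[0, b] by apply: subset_itv; rewrite bnd_simp.
rewrite /Rintegral fine_le //; try by apply: integrable_fin_num => //; apply: integrableS itn.
by apply: ge0_subset_integral => //; exact: measurable_int itn.
Qed.

Lemma normr_Rintegral_le_itvoc (f : R -> R) (a t : R) : 0 <= a -> a <= t ->
  mu.-integrable `[0, t] (EFin \o f) -> (forall r, 0 <= r <= a -> f r = 0) ->
  ((`| Rintegral mu `[0, t] f |)%:E <= \int[mu]_(x in `]a, t]) (`|f x|)%:E)%E.
Proof.
move=> a0 at_ itf f0.
have sub : `]a, t] `<=` `[0, t] by apply: subset_itvr; rewrite bnd_simp.
have -> : Rintegral mu `[0, t] f = Rintegral mu `]a, t] f.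
  rewrite -(@Rintegral_itvB _ f (BLeft 0) (BRight t) a itf) ?bnd_simp //.
  have -> : Rintegral mu `[0, a] f = Rintegral mu `[0, a] (fun _ => 0).
    by apply: eq_Rintegral => r; rewrite inE /= in_itv /= => /f0.
  by rewrite Rintegral_cst // mul0r subr0.
rewrite EFin_normr_Rintegral //; last exact: integrableS itf.
apply: le_abse_integral => //; exact: measurable_funS (measurable_int _ itf).
Qed.

Lemma integral_itvoc_norm_le (f : R -> R) (c a t : R) : a <= t ->
  measurable_fun `]a, t] f -> (forall r, a < r <= t -> `|f r| <= c) ->
  (\int[mu]_(x in `]a, t]) (`|f x|)%:E <= (c * (t - a))%:E)%E.
Proof.
move=> at_ mf fc.
apply: le_trans (_ : _ <= \int[mu]_(x in `]a, t]) (cst c%:E) x)%E _.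
  apply: ge0_le_integral => //; apply/measurable_EFinP; exact: measurableT_comp.
by rewrite integral_cst //= lebesgue_measure_itvoc.
Qed.

Lemma integral_itvoc_normM_le (q z : R -> R) (b a t M k Q : R) :
  0 <= a -> a <= t -> t <= b -> 0 <= M -> 0 < k ->
  measurable_fun `[0, b] q -> measurable_fun `]a, t] (fun x => q x * z x) ->
  (\int[mu]_(x in `[0%R, b]) ((q x) ^+ 2)%:E = Q%:E)%E ->
  (forall r, a < r <= t -> `|z r| <= M) ->
  (\int[mu]_(x in `]a, t]) (`|q x * z x|)%:E
     <= (M * (k / 2 * Q + (t - a) / (2 * k)))%:E)%E.
Proof.
move=> a0 at_ tb M0 k0 mq mqz qQ zM.
have sub : `]a, t] `<=` `[0, b] by apply: subset_itv; rewrite bnd_simp.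
have mq2 : measurable_fun `[0, b] (fun x => (q x ^+ 2)%:E).
  by apply/measurable_EFinP; exact: measurable_funX.
have c1 : 0 <= M * k / 2 by rewrite divr_ge0 // mulr_ge0 // ltW.
have c2 : 0 <= M / (2 * k) by rewrite divr_ge0 // mulr_ge0 // ltW.
apply: le_trans (_ : _ <= \int[mu]_(x in `]a, t])
   ((M * k / 2)%:E * ((q x) ^+ 2)%:E + (M / (2 * k))%:E))%E _.
  apply: ge0_le_integral => //.
  - by apply/measurable_EFinP; exact: measurableT_comp.
  - apply: emeasurable_funD => //; apply: emeasurable_funM => //.
    exact: measurable_funS mq2.
  - move=> r; rewrite /= in_itv /= => /zM zr.
    rewrite -EFinM -EFinD lee_fin normrM.
    apply: le_trans (_ : _ <= M * `|q r|) _; first by rewrite mulrC; apply: ler_wpM2r.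
    apply: le_trans (ler_wpM2l M0 (@normr_le_scaled_sqr k (q r) k0)) _.
    by rewrite mulrDr !mulrA mulr1.
have q2Q : (\int[mu]_(x in `]a, t]) (q x ^+ 2)%:E <= Q%:E)%E.
  rewrite -qQ; apply: ge0_subset_integral => // x _.
  by rewrite lee_fin sqr_ge0.
rewrite ge0_integralD //; last 2 first.
- by move=> x _; rewrite -EFinM lee_fin mulr_ge0 // sqr_ge0.
- by apply: emeasurable_funM => //; exact: measurable_funS mq2.
rewrite ge0_integralZl_EFin //; last 2 first.
- by move=> x _; rewrite lee_fin sqr_ge0.
- exact: measurable_funS mq2.
rewrite integral_cst //= lebesgue_measure_itvoc //.
have -> : M * (k / 2 * Q + (t - a) / (2 * k)) = M * k / 2 * Q + M / (2 * k) * (t - a).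
  by field; rewrite gt_eqF.
rewrite [leRHS]EFinD [in leRHS]EFinM; apply: leeD; first exact: lee_wpmul2l.
by rewrite -EFinM.
Qed.

Definition solves_ivp (q : R -> R) (b z0 dz0 : R) (z dz : R -> R) :=
  forall x, 0 <= x <= b ->
    mu.-integrable `[0, x] (fun t => (q t * z t)%:E) /\
    dz x = dz0 + Rintegral mu `[0, x] (fun t => q t * z t) /\
    mu.-integrable `[0, x] (fun t => (dz t)%:E) /\
    z x = z0 + Rintegral mu `[0, x] dz.

Lemma integrable_scale (D : set R) (f : R -> R) (c : R) : measurable D ->
  mu.-integrable D (EFin \o f) -> mu.-integrable D (EFin \o (fun t => c * f t)).
Proof.
move=> mD itf; have -> : EFin \o (fun t => c * f t) = (fun t => c%:E * (EFin \o f) t)%E.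
  by apply: funext => t /=; rewrite EFinM.
exact: integrableZl.
Qed.

Lemma solves_ivp_comb (c : R) {q : R -> R} {b z0 dz0 w0 dw0 : R} {z dz w dw : R -> R} :
  solves_ivp q b z0 dz0 z dz -> solves_ivp q b w0 dw0 w dw ->
  solves_ivp q b (c * z0 - w0) (c * dz0 - dw0)
    (fun x => c * z x - w x) (fun x => c * dz x - dw x).
Proof.
move=> zsol wsol x hx.
have [iqz [dzx [idz zx]]] := zsol x hx; have [iqw [dwx [idw wx]]] := wsol x hx.
have iqzw : mu.-integrable `[0, x] (EFin \o (fun t => c * (q t * z t))).
  exact: integrable_scale.
have idzw : mu.-integrable `[0, x] (EFin \o (fun t => c * dz t)).
  exact: integrable_scale.
have qzw : (fun t => q t * (c * z t - w t)) = (fun t => c * (q t * z t) - q t * w t).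
  by apply: funext => t; ring.
split.
  apply: (eq_integrable _ _ _ _ (integrableB _ iqzw iqw)) => // t _.
  by rewrite /= -EFinB; congr EFin; ring.
split; first by rewrite qzw RintegralB // RintegralZl // dzx dwx; ring.
split.
  by apply: (eq_integrable _ _ _ _ (integrableB _ idzw idw)) => // t _; rewrite /= -EFinB.
by rewrite RintegralB // RintegralZl // zx wx; ring.
Qed.

Section ZeroData.
Context {q : R -> R} {b Q : R}.
Hypothesis mq : measurable_fun `[0, b] q.
Hypothesis qQ : (\int[mu]_(x in `[0%R, b]) ((q x) ^+ 2)%:E = Q%:E)%E.
Context {z dz : R -> R}.
Hypothesis zsol : solves_ivp q b 0 0 z dz.

Lemma zero_data_bounded : exists B, forall t, 0 <= t <= b -> `|z t| + `|dz t| <= B.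
Proof.
exists (Rintegral mu `[0, b] (fun x => `|dz x|) +
        Rintegral mu `[0, b] (fun x => `|q x * z x|)) => t /andP[t0 tb].
have b0 : 0 <= b by exact: le_trans tb.
have [iqb [_ [idb _]]] := zsol b (ltac:(by rewrite b0 lexx)).
have [iqt [-> [idt ->]]] := zsol t (ltac:(by rewrite t0 tb)).
rewrite !add0r; apply: lerD.
  apply: le_trans (le_normr_Rintegral _ _) _ => //.
  exact: Rintegral_norm_le_subset.
apply: le_trans (le_normr_Rintegral _ _) _ => //.
exact: (Rintegral_norm_le_subset (fun x => q x * z x)).
Qed.

Lemma zero_data_tail_estimate {k a t M : R} :
  0 < k -> 0 <= a -> a < t -> t <= b -> 0 <= M ->
  (forall r, 0 <= r <= a -> z r = 0 /\ dz r = 0) ->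
  (forall r, a < r <= t -> `|z r| <= M /\ `|dz r| <= M) ->
  `|z t| + `|dz t| <= M * (t - a + k / 2 * Q + (t - a) / (2 * k)).
Proof.
move=> k0 a0 at_ tb M0 za zM.
have t0 : 0 <= t by apply: le_trans (ltW at_).
have sub : `]a, t] `<=` `[0, t] by apply: subset_itvr; rewrite bnd_simp.
have [iqz [dzt [idz zt]]] := zsol t (ltac:(by rewrite t0 tb)).
rewrite add0r in dzt; rewrite add0r in zt.
have zt_le : `|z t| <= M * (t - a).
  rewrite -lee_fin zt; apply: le_trans (normr_Rintegral_le_itvoc dz _ _ a0 (ltW at_) idz _) _.
    by move=> r /za [].
  apply: integral_itvoc_norm_le; first exact: ltW.
    by apply/measurable_EFinP; exact: measurable_funS (measurable_int _ idz).
  by move=> r /zM [].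
have dzt_le : `|dz t| <= M * (k / 2 * Q + (t - a) / (2 * k)).
  rewrite -lee_fin dzt.
  apply: le_trans (normr_Rintegral_le_itvoc (fun x => q x * z x) _ _ a0 (ltW at_) iqz _) _.
    by move=> r /za [->]; rewrite mulr0.
  apply: (integral_itvoc_normM_le _ _ b) => //; first exact: ltW.
    by apply/measurable_EFinP; exact: measurable_funS (measurable_int _ iqz).
  by move=> r /zM [].
by apply: le_trans (lerD zt_le dzt_le) _; rewrite -mulrDr addrA.
Qed.

Lemma zero_data_vanish_extend {k d a : R} : 0 < k -> 0 < d ->
  d + k / 2 * Q + d / (2 * k) <= 1 / 2 -> 0 <= a -> a <= b ->
  (forall r, 0 <= r <= a -> z r = 0 /\ dz r = 0) ->
  forall t, 0 <= t <= Num.min (a + d) b -> z t = 0 /\ dz t = 0.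
Proof.
move=> k0 d0 kd a0 ab za; set u := Num.min (a + d) b.
have ub : u <= b by rewrite ge_min lexx orbT.
have ud : u <= a + d by rewrite ge_min lexx.
have au : a <= u by rewrite le_min ab andbT lerDl ltW.
have u0 : 0 <= u by exact: le_trans au.
have [B zB] := zero_data_bounded.
set S := [set `|z t| + `|dz t| | t in `[0, u]].
have S0 : S (`|z 0| + `|dz 0|) by exists 0 => //=; rewrite in_itv /= lexx u0.
have hS : has_sup S.
  split; first by exists (`|z 0| + `|dz 0|).
  exists B => y [t]; rewrite /= in_itv /= => /andP[t0 tu] <-.
  by apply: zB; rewrite t0 (le_trans tu ub).
set M := sup S.
have zM r : 0 <= r <= u -> `|z r| + `|dz r| <= M.
  by move=> ru; apply: sup_upper_bound => //; exists r; rewrite // in_itv.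
have M0 : 0 <= M by apply: le_trans (zM 0 _); rewrite ?lexx ?u0.
(* The constraint on k and d makes the tail estimate contract by a factor 2. *)
have halved r : 0 <= r <= u -> `|z r| + `|dz r| <= M / 2.
  move=> /andP[r0 ru]; have [ra|ar] := leP r a.
    have [-> ->] := za r (ltac:(by rewrite r0 ra)).
    by rewrite normr0 addr0 divr_ge0.
  apply: le_trans (zero_data_tail_estimate k0 a0 ar (le_trans ru ub) M0 za _) _.
    move=> s /andP[sa sr].
    have zs := zM s (ltac:(by rewrite (le_trans sr ru) (le_trans a0 (ltW sa)))).
    by split; apply: le_trans zs; rewrite ?lerDl ?lerDr.
  have -> : M / 2 = M * (1 / 2) by rewrite mul1r.
  rewrite ler_wpM2l //; apply: le_trans kd.
  have rad : r - a <= d by rewrite lerBlDl (le_trans ru ud).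
  apply: lerD; first by rewrite lerD2r.
  by rewrite ler_wpM2r // invr_ge0 mulr_ge0 // ltW.
have MM : M <= M / 2.
  apply: ge_sup; first by exists (`|z 0| + `|dz 0|).
  by move=> y [r]; rewrite /= in_itv /= => ru <-; exact: halved.
move=> t tu; have zt0 : `|z t| + `|dz t| <= 0 by apply: le_trans (zM t tu) _; lra.
have n1 := normr_ge0 (z t); have n2 := normr_ge0 (dz t).
by split; apply/eqP; rewrite -normr_eq0 eq_le normr_ge0 andbT; lra.
Qed.

Lemma zero_data_vanish_upto {k d : R} (n : nat) : 0 < k -> 0 < d ->
  d + k / 2 * Q + d / (2 * k) <= 1 / 2 ->
  forall r, 0 <= r <= Num.min (n%:R * d) b -> z r = 0 /\ dz r = 0.
Proof.
move=> k0 d0 kd; elim: n => [|n IH] r.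
  rewrite mul0r => /andP[r0]; rewrite le_min => /andP[r_le0 rb].
  have b0 : 0 <= b by exact: le_trans rb.
  have -> : r = 0 by apply/le_anti; rewrite r0 r_le0.
  have [_ [-> [_ ->]]] := zsol 0 (ltac:(by rewrite lexx b0)).
  by rewrite set_itv1 !Rintegral_set1 addr0.
move=> rn; have [nd_b|b_nd] := leP (n%:R * d) b.
  rewrite (min_l nd_b) in IH.
  apply: (zero_data_vanish_extend k0 d0 kd _ nd_b IH); first by rewrite mulr_ge0 // ltW.
  by move: rn; rewrite -addn1 natrD mulrDl mul1r.
apply: IH; move: rn; rewrite (min_r (ltW b_nd)) !le_min => /andP[r0 /andP[_ rb]].
by rewrite r0 rb.
Qed.

End ZeroData.

Lemma halving_step_exists {Q : R} : 0 <= Q ->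
  exists k d : R, [/\ 0 < k, 0 < d & d + k / 2 * Q + d / (2 * k) <= 1 / 2].
Proof.
move=> Q0; exists (1 / (2 * Q + 2)), (1 / (4 * (Q + 2))).
split; rewrite ?divr_gt0 //; try lra.
have -> : 1 / (4 * (Q + 2)) + 1 / (2 * Q + 2) / 2 * Q + 1 / (4 * (Q + 2)) / (2 * (1 / (2 * Q + 2)))
    = 1 / 2 - 1 / (4 * (Q + 1)).
  by field; apply/and3P; split; apply/negP => /eqP; lra.
by rewrite lerBlDr lerDl divr_ge0 //; lra.
Qed.

Lemma solves_ivp_zero_data {q : R -> R} {b : R} {z dz : R -> R} :
  measurable_fun `[0, b] q -> (\int[mu]_(x in `[0%R, b]) ((q x) ^+ 2)%:E < +oo)%E ->
  solves_ivp q b 0 0 z dz -> forall x, 0 <= x <= b -> z x = 0 /\ dz x = 0.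
Proof.
move=> mq q2fin zsol x /andP[x0 xb].
have q2ge0 : (0 <= \int[mu]_(x in `[0%R, b]) ((q x) ^+ 2)%:E)%E.
  by apply: integral_ge0 => y _; rewrite lee_fin sqr_ge0.
set Q := fine (\int[mu]_(x in `[0%R, b]) ((q x) ^+ 2)%:E).
have qQ : (\int[mu]_(x in `[0%R, b]) ((q x) ^+ 2)%:E = Q%:E)%E.
  by rewrite fineK // ge0_fin_numE.
have [k [d [k0 d0 kd]]] := halving_step_exists (fine_ge0 q2ge0).
have [N bN] : exists N : nat, b <= N%:R * d.
  exists (Num.Def.archi_bound (b / d)); rewrite -ler_pdivrMr //.
  by apply/ltW/archi_boundP; rewrite divr_ge0 ?(le_trans x0 xb) ?ltW.
apply: (zero_data_vanish_upto mq qQ zsol N k0 d0 kd).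
by rewrite x0 le_min xb (le_trans xb bN).
Qed.

Lemma solves_ivp_proportional {q : R -> R} {b c z0 dz0 : R} {z dz w dw : R -> R} :
  measurable_fun `[0, b] q -> (\int[mu]_(x in `[0%R, b]) ((q x) ^+ 2)%:E < +oo)%E ->
  solves_ivp q b z0 dz0 z dz -> solves_ivp q b (c * z0) (c * dz0) w dw ->
  forall x, 0 <= x <= b -> w x = c * z x /\ dw x = c * dz x.
Proof.
move=> mq q2fin zsol wsol x hx.
have := solves_ivp_comb c zsol wsol; rewrite !subrr => zero_sol.
have [e1 e2] := solves_ivp_zero_data mq q2fin zero_sol x hx.
by split; apply/esym/eqP; rewrite -subr_eq0; apply/eqP.
Qed.

End Volterra.

Local Open Scope complex_scope.

Section ComplexSeries.
Context {R : realType}.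
Local Notation C := R[i].

Lemma Re_add (x y : C) : complex.Re (x + y) = complex.Re x + complex.Re y.
Proof. by case: x => ? ?; case: y. Qed.

Lemma Im_add (x y : C) : complex.Im (x + y) = complex.Im x + complex.Im y.
Proof. by case: x => ? ?; case: y. Qed.

Lemma Re_sub (x y : C) : complex.Re (x - y) = complex.Re x - complex.Re y.
Proof. by case: x => ? ?; case: y. Qed.

Lemma Im_sub (x y : C) : complex.Im (x - y) = complex.Im x - complex.Im y.
Proof. by case: x => ? ?; case: y. Qed.

Lemma Re_scale (c : R) (x : C) : complex.Re (c%:C * x) = c * complex.Re x.
Proof. by case: x => ? ? /=; rewrite mul0r subr0. Qed.

Lemma Im_scale (c : R) (x : C) : complex.Im (c%:C * x) = c * complex.Im x.
Proof. by case: x => ? ? /=; rewrite mul0r addr0. Qed.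

Lemma sph_pair_at0 k : sph_pair k (0 : C) = if k is 0 then (1, 0) else (0, 0).
Proof.
elim: k => [|k IH]; first by rewrite /= /sph_j0 /sph_j1 eqxx.
by rewrite /= IH eqxx; case: k {IH}.
Qed.

Lemma sph_j0_at0 : sph_j 0 (0 : C) = 1.
Proof. by rewrite /sph_j sph_pair_at0. Qed.

Lemma sph_jS_at0 k : sph_j k.+1 (0 : C) = 0.
Proof. by rewrite /sph_j sph_pair_at0. Qed.

Lemma ccos0 : ccos (0 : C) = 1.
Proof.
rewrite /ccos /= sin0 cos0 /coshR /sinhR oppr0 expR0 mul0r oppr0 mul1r.
by apply/eqP; rewrite eq_complex /= eqxx andbT; apply/eqP; field.
Qed.

Lemma eq_ccvg {s t : nat -> C} {l : C} : (forall n, s n = t n) -> ccvg s l -> ccvg t l.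
Proof. by move=> e; have -> : s = t by apply: funext. Qed.

Lemma ccvg_near_cst {s : nat -> C} {l c : C} :
  ccvg s l -> (\forall n \near \oo, s n = c) -> l = c.
Proof.
move=> [sRe sIm] sc.
have cRe : (fun n => complex.Re (s n)) @ \oo --> complex.Re c.
  by apply: cvg_near_cst; move: sc; apply: filterS => n ->.
have cIm : (fun n => complex.Im (s n)) @ \oo --> complex.Im c.
  by apply: cvg_near_cst; move: sc; apply: filterS => n ->.
have eRe : complex.Re l = complex.Re c by rewrite -(cvg_lim _ sRe) // (cvg_lim _ cRe).
have eIm : complex.Im l = complex.Im c by rewrite -(cvg_lim _ sIm) // (cvg_lim _ cIm).
by move: eRe eIm {sRe sIm cRe cIm sc}; case: l => ? ?; case: c => ? ? /= -> ->.
Qed.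

Lemma ccvgD_scale (c : R) {s t : nat -> C} {l m : C} : ccvg s l -> ccvg t m ->
  ccvg (fun n => s n + c%:C * t n) (l + c%:C * m).
Proof.
move=> [sRe sIm] [tRe tIm]; split.
- have -> : (fun n => complex.Re (s n + c%:C * t n)) =
              (fun n => complex.Re (s n) + c * complex.Re (t n)).
    by apply: funext => n; rewrite Re_add Re_scale.
  by rewrite Re_add Re_scale; apply: cvgD => //; exact: cvgMr.
- have -> : (fun n => complex.Im (s n + c%:C * t n)) =
              (fun n => complex.Im (s n) + c * complex.Im (t n)).
    by apply: funext => n; rewrite Im_add Im_scale.
  by rewrite Im_add Im_scale; apply: cvgD => //; exact: cvgMr.
Qed.

Lemma ccvg_shiftB {s : nat -> C} {l a : C} : ccvg s l -> ccvg (fun n => s n.+1 - a) (l - a).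
Proof.
move=> [sRe sIm]; split.
- rewrite Re_sub (funext (fun n => Re_sub _ _)).
  by apply: cvgB; [rewrite (cvg_shiftS (fun n => complex.Re (s n))) | exact: cvg_cst].
- rewrite Im_sub (funext (fun n => Im_sub _ _)).
  by apply: cvgB; [rewrite (cvg_shiftS (fun n => complex.Im (s n))) | exact: cvg_cst].
Qed.

End ComplexSeries.

Section CharacteristicFunction.
Context {R : realType}.
Local Notation mu := (@lebesgue_measure R).

Lemma pi_itv : 0 <= (pi : R) <= pi.
Proof. by rewrite lexx ltW // pi_gt0. Qed.

Context {q : R -> R} {h : R} {phi dphi : R[i] -> R -> R[i]}.

Lemma is_phi_Re_at0 : is_phi q h phi dphi ->
  solves_ivp q pi 1 h (fun t => complex.Re (phi 0 t)) (fun t => complex.Re (dphi 0 t)).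
Proof.
move=> hphi x hx; have [[iqphi _] [dphix [[idphi _] phix]]] := hphi 0 x hx.
have qphi : (fun t => complex.Re (((q t)%:C - 0 ^+ 2) * phi 0 t)) =
            (fun t => q t * complex.Re (phi 0 t)).
  by apply: funext => t; rewrite expr2 mul0r subr0 Re_scale.
split.
  by apply: (eq_integrable _ _ _ _ iqphi) => // t _; rewrite expr2 mul0r subr0 Re_scale.
split; first by rewrite dphix Re_add /cint /= qphi.
by split => //; rewrite phix Re_add /cint.
Qed.

Lemma zero_eigenvalue_char_eq0 {H : R} {u du : R -> R} :
  L2_0pi q -> zero_is_eigenvalue q h H -> solves_ivp q pi 1 h u du ->
  du pi + H * u pi = 0.
Proof.
move=> [mq q2fin] [y [dy [ysol [[x0 [hx0 yx0]] [bc0 bcpi]]]]] usol.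
have yu : forall x, 0 <= x <= pi -> y x = y 0 * u x /\ dy x = y 0 * du x.
  apply: solves_ivp_proportional usol _ => //.
  have -> : y 0 * h = dy 0 by apply/eqP; rewrite mulrC eq_sym -subr_eq0 bc0.
  by rewrite mulr1.
have y0 : y 0 != 0.
  by apply: contraNneq yx0 => y00; have [-> _] := yu x0 hx0; rewrite y00 mul0r.
have [ypi dypi] := yu pi pi_itv.
move: bcpi; rewrite ypi dypi mulrCA -mulrDr => /eqP.
by rewrite mulf_eq0 (negbTE y0) => /eqP.
Qed.

Context {g gam : nat -> R -> R}.
Hypothesis hN : NSBF_coeffs q h phi dphi g gam.

Lemma NSBF_gam0E {x : R} : 0 <= x <= pi ->
  dphi 0 x - (h + Rintegral mu `[0, x] q / 2)%:C = (gam 0%N x)%:C.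
Proof.
move=> hx; have := hN.2.1 0 x hx; rewrite !mul0r ccos0 mulr1 addr0 => S.
apply: (ccvg_near_cst S); exists 1%N => // [[|N]] //= _.
rewrite big_nat_recl // big1 => [|n _].
  by rewrite addr0 muln0 sph_j0_at0 expr0 mul1r mulr1.
by rewrite mulnS addSn sph_jS_at0 mulr0.
Qed.

Lemma char_function_NSBF (H : R) (rho : R[i]) :
  cseries (fun n => ((-1) ^+ n * (gam n pi + H * g n pi))%:C * sph_j (2 * n) (rho * pi%:C))
    (dphi rho pi + rho * csin (rho * pi%:C)
     - (h + Rintegral mu `[0, pi] q / 2)%:C * ccos (rho * pi%:C)
     + H%:C * (phi rho pi - ccos (rho * pi%:C))).
Proof.
apply: eq_ccvg (ccvgD_scale H (hN.2.1 rho pi pi_itv) (hN.1 rho pi pi_itv)) => N.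
rewrite mulr_sumr -big_split /=; apply: eq_bigr => n _.
rewrite !(rmorphM, rmorphD); ring.
Qed.

End CharacteristicFunction.

Theorem mainTheorem4 (R : realType) (q : R -> R) (h H : R)
    (phi dphi : R[i] -> R -> R[i]) (g gam : nat -> R -> R) :
  L2_0pi q ->
  zero_is_eigenvalue q h H ->
  is_phi q h phi dphi ->
  NSBF_coeffs q h phi dphi g gam ->
  let omega := Rintegral (@lebesgue_measure R) `[0, pi] q / 2 in
  let hn := fun n : nat => gam n pi + H * g n pi in
  let Phi := fun rho : R[i] => dphi rho pi + H%:C * phi rho pi in
  h + H + omega = - hn 0%N /\
  (forall rho : R[i],
     cseries (fun n => ((-1) ^+ n.+1 * hn n.+1)%:C * sph_j (2 * n.+1) (rho * pi%:C))
       (Phi rho + rho * csin (rho * pi%:C)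
        - (hn 0%N)%:C * (sph_j 0 (rho * pi%:C) - ccos (rho * pi%:C)))).
Proof.
move=> q2 eig hphi hN omega hn Phi.
have Phi0 := zero_eigenvalue_char_eq0 q2 eig (is_phi_Re_at0 hphi).
have gam0 := congr1 (@complex.Re R) (NSBF_gam0E hN pi_itv); rewrite Re_sub /= in gam0.
have g0 := congr1 (@complex.Re R) (hN.2.2.1 pi pi_itv); rewrite Re_sub /= in g0.
have hn0 : h + H + omega = - hn 0%N by rewrite /hn /omega g0 -gam0; lra.
split => // rho.
pose F n := ((-1) ^+ n * hn n)%:C * sph_j (2 * n) (rho * pi%:C).
apply: (eq_ccvg (s := fun N => \sum_(0 <= n < N.+1) F n - F 0%N)).
  by move=> N; rewrite big_nat_recl // addrC addKr.
have -> : Phi rho + rho * csin (rho * pi%:C)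
    - (hn 0%N)%:C * (sph_j 0 (rho * pi%:C) - ccos (rho * pi%:C)) =
  dphi rho pi + rho * csin (rho * pi%:C) - (h + omega)%:C * ccos (rho * pi%:C)
   + H%:C * (phi rho pi - ccos (rho * pi%:C)) - F 0%N.
  have -> : h + omega = - hn 0%N - H by lra.
  by rewrite /F /Phi expr0 mul1r muln0 rmorphB rmorphN; ring.
exact: ccvg_shiftB (char_function_NSBF hN H rho).
Qed.
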